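(* Let $k$ be a field of characteristic $p>0$, let $d_1,\ldots,d_{n-1}$ be positive integers and suppose $d_n=\sum_{i=1}^{n-1}(d_i-1)$. Let \[ A = k[x_1,\ldots,x_n]/(x_1^{d_1}, \ldots, x_n^{d_n}) \quad\text{and}\quad B = k[x_1,\ldots,x_n]/(x_1^{d_1}, \ldots, x_{n-1}^{d_{n-1}}, x_n^{d_n-1}). \] If the multinomial coefficient $\binom{d_n}{d_1-1, \ldots, d_{n-1}-1}=\frac{d_n!}{(d_1-1)!\cdots(d_{n-1}-1)!}$ is not divisible by $p$, then both $A$ and $B$ have the weak Lefschetz property. If $\binom{d_n}{d_1-1, \ldots, d_{n-1}-1}$ is divisible by $p$, then $A$ fails to have the weak Lefschetz property.
   Context: Algebras are graded by degree, $A=\bigoplus_{i\ge0}A_i$. A graded artinian algebra $A$ has the weak Lefschetz property if there is a linear form $\ell\in A_1$ such that for every $i$ the map $A_i\to A_{i+1}$, $a\mapsto \ell a$, is injective or surjective. *)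

From HB Require Import structures.
From mathcomp Require Import all_boot all_order all_algebra.
From mathcomp Require Import mpoly.
Set Implicit Arguments. Unset Strict Implicit. Unset Printing Implicit Defensive.
Import Order.TTheory GRing.Theory.
Local Open Scope ring_scope.

(* We work with the polynomial ring {mpoly k[n]} and the ideal I_e; graded
   pieces of the quotient are k[x]_i / (I_e)_i (I_e is a monomial, hence
   homogeneous, ideal). *)
Section MCI.
Variables (k : fieldType) (n : nat).

Definition in_mci_ideal (e : 'I_n -> nat) (f : {mpoly k[n]}) : Prop :=
  exists g : 'I_n -> {mpoly k[n]}, f = \sum_(j < n) g j * 'X_j ^+ e j.

Definition mult_injective (e : 'I_n -> nat) (l : {mpoly k[n]}) (i : nat) : Prop :=
  forall f : {mpoly k[n]}, f \is i.-homog ->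
    in_mci_ideal e (l * f) -> in_mci_ideal e f.

Definition mult_surjective (e : 'I_n -> nat) (l : {mpoly k[n]}) (i : nat) : Prop :=
  forall g : {mpoly k[n]}, g \is i.+1.-homog ->
    exists f : {mpoly k[n]}, f \is i.-homog /\ in_mci_ideal e (g - l * f).

Definition mci_WLP (e : 'I_n -> nat) : Prop :=
  exists l : {mpoly k[n]}, l \is 1.-homog /\
    forall i : nat, mult_injective e l i \/ mult_surjective e l i.

End MCI.

(* Let x_w be the last variable, s = prod_(j <> w) x_j^(e_j - 1) and
   tau = s * x_w^(e_w - 1), the socle monomial of A = k[x]/(x_j^e_j).  Since A is
   Gorenstein, a form vanishes in A iff its products with all monomials have zero
   coefficient at tau.  Modulo l = L + x_w, with L a linear form in the other
   variables, x_w acts as -L, so every form is congruent to one free of x_w, and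
   such a form vanishes in A above degree deg s and is a multiple of x^s in degree
   deg s.  Hence, when e_w <= deg s <= e_w + 1 (here deg s = d_n, and e_w is d_n
   for A, d_n - 1 for B) and the coefficient of x^s in L^(deg s) is nonzero, l is injective
   below degree e_w and surjective from there on; for L = sum_(j <> w) x_j this
   coefficient is the multinomial coefficient of the statement.  Conversely, if
   e_w = deg s and that multinomial vanishes in k, then the coefficient vanishes
   for every L, and in degree e_w - 1 one finds a nonzero kernel element of l that
   pairs nontrivially with A_(e_w): the cofactor of x_w^e_w - (-L)^e_w when l
   involves x_w, and a combination of x^s/x_i and x^s/x_j otherwise. *)

From HB Require Import structures.
From mathcomp Require Import all_boot all_order all_algebra.
From mathcomp Require Import mpoly ring zify.
Set Implicit Arguments. Unset Strict Implicit. Unset Printing Implicit Defensive.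
Import GRing.Theory.
Local Open Scope ring_scope.

Section MonomialOrder.
Variable n : nat.
Implicit Types mu nu : 'X_{1..n}.

Lemma lepm_mdeg mu nu : (mu <= nu)%MM -> (mdeg mu <= mdeg nu)%N.
Proof. by move=> le_mu_nu; rewrite -(submK le_mu_nu) mdegD leq_addl. Qed.

Lemma lepm_mdeg_eq mu nu : (mu <= nu)%MM -> mdeg mu = mdeg nu -> mu = nu.
Proof.
move=> le_mu_nu; rewrite -[in mdeg nu](submK le_mu_nu) mdegD => /eqP.
rewrite -{1}[mdeg mu]add0n eqn_add2r eq_sym mdeg_eq0 => /eqP nu_mu0.
by rewrite -(submK le_mu_nu) nu_mu0 add0m.
Qed.

Lemma mnm1_lepm mu (j : 'I_n) : (0 < mu j)%N -> (U_(j) <= mu)%MM.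
Proof. by rewrite lep1mP lt0n. Qed.

Lemma mdeg_subm1 mu (j : 'I_n) : (0 < mu j)%N -> mdeg (mu - U_(j))%MM = (mdeg mu).-1.
Proof. by move/mnm1_lepm/submK => {2}<-; rewrite mdegD mdeg1 addn1. Qed.

Lemma mnm1Mn_lepm mu (j : 'I_n) m : (m <= mu j)%N -> (U_(j) *+ m <= mu)%MM.
Proof.
move=> le_m; apply/mnm_lepP => i; rewrite mulmnE mnm1E.
by case: eqP => [<-|_]; rewrite ?mul1n ?mul0n.
Qed.

Lemma mdeg_subm1Mn mu (j : 'I_n) : mdeg mu = (mdeg (mu - U_(j) *+ mu j)%MM + mu j)%N.
Proof. by rewrite -{1}(submK (mnm1Mn_lepm (leqnn (mu j)))) mdegD mdegMn mdeg1 mul1n. Qed.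

Lemma subm1Mn_eq0 mu (j : 'I_n) : (mu - U_(j) *+ mu j)%MM j = 0%N.
Proof. by rewrite mnmBE mulmnE mnm1E eqxx mul1n subnn. Qed.

End MonomialOrder.

Section Coefficients.
Variables (R : comNzRingType) (n : nat).
Implicit Types (p l : {mpoly R[n]}) (mu nu : 'X_{1..n}).

Lemma mcoeffMXE p nu mu :
  (p * 'X_[nu])@_mu = if (nu <= mu)%MM then p@_(mu - nu)%MM else 0.
Proof.
case: ifP => [le_nu_mu|nle_nu_mu]; first by rewrite -{1}(submK le_nu_mu) addmC mcoeffMX.
apply/eqP; rewrite mcoeff_eq0; apply/negP.
rewrite (perm_mem (msuppMX p nu)) => /mapP [m _ mu_eq].
by move: nle_nu_mu; rewrite mu_eq lem_addr.
Qed.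

Lemma mpolyX_subm1Mn mu (j : 'I_n) :
  'X_[mu] = 'X_[mu - U_(j) *+ mu j] * 'X_j ^+ mu j :> {mpoly R[n]}.
Proof. by rewrite mpolyXn -mpolyXD submK // mnm1Mn_lepm. Qed.

Lemma dhomogXi (j : 'I_n) : ('X_j : {mpoly R[n]}) \is 1.-homog.
Proof. by rewrite dhomogX; apply/eqP; apply: mdeg1. Qed.

Lemma dhomog1E l : l \is 1.-homog -> l = \sum_j l@_U_(j) *: 'X_j.
Proof.
move=> homl; apply/mpolyP => mu; rewrite raddf_sum /=.
have [/mdeg1P [i /eqP ->]|deg_mu] := boolP (mdeg mu == 1%N).
  rewrite (bigD1 i) //= mcoeffZ mcoeffX eqxx mulr1 big1 ?addr0 // => j ji.
  by rewrite mcoeffZ mcoeffX eq_mnm1 (negbTE ji) mulr0.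
rewrite (dhomog_nemf_coeff homl deg_mu) big1 // => j _.
rewrite mcoeffZ mcoeffX; case: eqP => [U_mu|]; last by rewrite mulr0.
by move: deg_mu; rewrite -U_mu mdeg1.
Qed.

Lemma mcoeff_dhomog1M l p mu : l \is 1.-homog ->
  (l * p)@_mu = \sum_j l@_U_(j) * (if (0 < mu j)%N then p@_(mu - U_(j))%MM else 0).
Proof.
move=> homl; rewrite {1}(dhomog1E homl) mulr_suml raddf_sum; apply: eq_bigr => j _.
by rewrite /= -scalerAl mcoeffZ -commr_mpolyX mcoeffMXE lep1mP lt0n.
Qed.

Lemma mcoeff_dhomog1M_neq0 l p mu : l \is 1.-homog -> (l * p)@_mu != 0 ->
  exists2 j : 'I_n, (0 < mu j)%N & p@_(mu - U_(j))%MM != 0.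
Proof.
move=> homl lp_mu.
suff /existsP [j /andP [mu_j p_j]] : [exists j, (0 < mu j)%N && (p@_(mu - U_(j))%MM != 0)].
  by exists j.
apply: contraR lp_mu => /existsPn no_j; rewrite mcoeff_dhomog1M // big1 // => j _.
case: ifP => mu_j; last by rewrite mulr0.
by move: (no_j j); rewrite mu_j /= negbK => /eqP ->; rewrite mulr0.
Qed.

End Coefficients.

Arguments mpolyX_subm1Mn {R n} mu j.

Section Multinomial.
Variable n : nat.
Implicit Types mu : 'X_{1..n}.

Definition mnm_fact mu : nat := \prod_(j < n) (mu j)`!.

Definition multinomial mu : nat := (mdeg mu)`! %/ mnm_fact mu.

Lemma mnm_fact_gt0 mu : (0 < mnm_fact mu)%N.
Proof. by apply: prodn_gt0 => j; apply: fact_gt0. Qed.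

Lemma mnm_fact_subm1 mu (j : 'I_n) : (0 < mu j)%N ->
  mnm_fact mu = (mnm_fact (mu - U_(j))%MM * mu j)%N.
Proof.
move=> mu_j; rewrite /mnm_fact (bigD1 j) // [in RHS](bigD1 j) //= mnmBE mnm1E eqxx.
rewrite subn1 -{1}(prednK mu_j) factS (prednK mu_j) [RHS]mulnC mulnA.
by congr (_ * _)%N; apply: eq_bigr => i /negbTE ij; rewrite mnmBE mnm1E eq_sym ij subn0.
Qed.

Lemma mnm_fact_mul_sum_multinomial mu : (0 < mdeg mu)%N ->
  (forall j : 'I_n, (0 < mu j)%N ->
     (mnm_fact (mu - U_(j))%MM * multinomial (mu - U_(j))%MM = (mdeg mu).-1`!)%N) ->
  (mnm_fact mu * \sum_(j < n | (0 < mu j)%N) multinomial (mu - U_(j))%MM = (mdeg mu)`!)%N.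
Proof.
move=> deg_mu IH; rewrite -(prednK deg_mu) factS (prednK deg_mu) big_distrr /=.
rewrite {1}mdegE big_distrl /= [in RHS](bigID (fun j => 0 < mu j)%N) /=.
rewrite [X in (_ = _ + X)%N]big1 ?addn0 => [|j]; last by rewrite lt0n negbK => /eqP ->.
apply: eq_bigr => j mu_j.
by rewrite (mnm_fact_subm1 mu_j) mulnAC IH // mulnC.
Qed.

Lemma mnm_fact_mul_multinomial mu : (mnm_fact mu * multinomial mu)%N = (mdeg mu)`!.
Proof.
move deg_mu: (mdeg mu) => N; elim: N mu deg_mu => [|N IH] mu deg_mu.
  move/eqP: deg_mu; rewrite mdeg_eq0 => /eqP ->.
  by rewrite /multinomial /mnm_fact mdeg0 big1 // => j _; rewrite mnm0E.
have deg_pos : (0 < mdeg mu)%N by rewrite deg_mu.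
have rec := mnm_fact_mul_sum_multinomial deg_pos.
have IH_sub j : (0 < mu j)%N ->
    (mnm_fact (mu - U_(j))%MM * multinomial (mu - U_(j))%MM = (mdeg mu).-1`!)%N.
  by move=> mu_j; rewrite IH ?mdeg_subm1 ?deg_mu.
by rewrite /multinomial -(rec IH_sub) mulKn ?mnm_fact_gt0 // rec // deg_mu.
Qed.

Lemma multinomialS mu : (0 < mdeg mu)%N ->
  multinomial mu = (\sum_(j < n | (0 < mu j)%N) multinomial (mu - U_(j))%MM)%N.
Proof.
move=> deg_mu; apply/eqP; rewrite -(eqn_pmul2l (mnm_fact_gt0 mu)).
rewrite mnm_fact_mul_multinomial mnm_fact_mul_sum_multinomial // => j mu_j.
by rewrite mnm_fact_mul_multinomial mdeg_subm1.
Qed.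

Lemma multinomial_neq1 mu : multinomial mu != 1%N ->
  exists i1 i2 : 'I_n, [/\ i1 != i2, (0 < mu i1)%N & (0 < mu i2)%N].
Proof.
move=> mu_neq1.
suff /existsP [i1 /existsP [i2 /and3P [? ? ?]]] :
    [exists i1, exists i2, [&& i1 != i2, 0 < mu i1 & 0 < mu i2]]%N by exists i1, i2.
apply: contraR mu_neq1 => /negP no_pair; apply/eqP.
have [i0 mu_i0|mu0] := pickP (fun i : 'I_n => 0 < mu i)%N; last first.
  have -> : mu = 0%MM by apply/mnmP => i; rewrite mnm0E; apply/eqP; rewrite -leqn0 leqNgt mu0.
  by rewrite /multinomial /mnm_fact mdeg0 big1 // => j _; rewrite mnm0E.
have others i : i != i0 -> mu i = 0%N.
  move=> ii0; apply/eqP; rewrite -leqn0 leqNgt; apply/negP => mu_i; apply: no_pair.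
  by apply/existsP; exists i; apply/existsP; exists i0; rewrite ii0 mu_i mu_i0.
rewrite /multinomial /mnm_fact mdegE (bigD1 i0) // [X in (_ %/ X)%N](bigD1 i0) //=.
rewrite !big1 => [|i /others ->|i /others ->] //.
by rewrite addn0 muln1 divnn fact_gt0.
Qed.

End Multinomial.

Lemma mcoeff_dhomog1X (R : comNzRingType) n (l : {mpoly R[n]}) (mu : 'X_{1..n}) :
  l \is 1.-homog ->
  (l ^+ mdeg mu)@_mu = (multinomial mu)%:R * \prod_(j < n) l@_U_(j) ^+ mu j.
Proof.
move=> homl; move deg_mu: (mdeg mu) => N; elim: N mu deg_mu => [|N IH] mu deg_mu.
  move/eqP: deg_mu; rewrite mdeg_eq0 => /eqP ->.
  rewrite expr0 mcoeff1 eqxx /multinomial /mnm_fact mdeg0 !big1 ?divnn ?mulr1 // => j _;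
    by rewrite mnm0E.
rewrite exprS mcoeff_dhomog1M // multinomialS ?deg_mu // natr_sum mulr_suml [RHS]big_mkcond /=.
apply: eq_bigr => j _; case: ifP => mu_j; last by rewrite mulr0.
have -> : \prod_i l@_U_(i) ^+ mu i = l@_U_(j) * \prod_i l@_U_(i) ^+ (mu - U_(j))%MM i.
  rewrite (bigD1 j) // [X in _ * X](bigD1 j) //= mnmBE mnm1E eqxx subn1.
  rewrite -{1}(prednK mu_j) exprS -mulrA; congr (_ * (_ * _)).
  by apply: eq_bigr => i /negbTE ij; rewrite mnmBE mnm1E eq_sym ij subn0.
by rewrite IH ?mdeg_subm1 ?deg_mu // mulrCA.
Qed.

Section FreeOf.
Variables (R : comNzRingType) (n : nat) (w : 'I_n).
Implicit Types (p q u : {mpoly R[n]}) (mu rho : 'X_{1..n}).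

Definition free_of_pred p := all (fun mu : 'X_{1..n} => mu w == 0%N) (msupp p).
Definition free_of := [qualify p | free_of_pred p].

Lemma free_ofP p : reflect (forall mu, (0 < mu w)%N -> p@_mu = 0) (p \is free_of).
Proof.
apply: (iffP allP) => [p_free mu mu_w|p_free mu]; last first.
  by rewrite mcoeff_msupp; apply: contraR; rewrite -lt0n => /p_free ->.
by apply/eqP; apply: contraTT mu_w; rewrite -mcoeff_msupp => /p_free /eqP ->.
Qed.

Lemma free_of_subalg_closed : GRing.subsemialg_closed free_of.
Proof.
split.
- by apply/free_ofP => mu mu_w; rewrite mcoeff1; case: eqP mu_w => // ->; rewrite mnm0E.
- split; first by apply/free_ofP => mu _; rewrite mcoeff0.
  by move=> p q /free_ofP p_free /free_ofP q_free; apply/free_ofP => mu mu_w;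
     rewrite mcoeffD p_free ?q_free ?addr0.
- by move=> c p /free_ofP p_free; apply/free_ofP => mu mu_w; rewrite mcoeffZ p_free ?mulr0.
move=> p q /free_ofP p_free /free_ofP q_free; apply/free_ofP => mu mu_w.
rewrite mcoeffM big1 // => -[m1 m2] /= /eqP mu_eq.
have : (0 < m1 w)%N || (0 < m2 w)%N by rewrite -addn_gt0 -mnmDE -mu_eq.
by case/orP => [/p_free -> | /q_free ->]; rewrite ?mul0r ?mulr0.
Qed.

HB.instance Definition _ :=
  GRing.isSubalgClosed.Build R {mpoly R[n]} free_of_pred free_of_subalg_closed.

Lemma free_of_mpolyX mu : ('X_[mu] \is free_of) = (mu w == 0%N).
Proof. by rewrite qualifE /free_of_pred msuppX /= andbT. Qed.

Lemma dhomog1_free_of p : p \is 1.-homog -> (p \is free_of) = (p@_U_(w) == 0).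
Proof.
move=> homp; apply/free_ofP/eqP => [p_free|pw0 mu mu_w]; first by apply: p_free; rewrite mnm1E eqxx.
have [/mdeg1P [j /eqP mu_j]|deg_mu] := boolP (mdeg mu == 1%N).
  by move: mu_w; rewrite mu_j mnm1E; case: (eqVneq j w) => [-> _|].
exact: dhomog_nemf_coeff homp deg_mu.
Qed.

Lemma mcoeffM_free p u rho b : u \is free_of -> u \is (mdeg rho).-homog -> rho w = 0%N ->
  (p * u)@_(rho + U_(w) *+ b)%MM = u@_rho * p@_(U_(w) *+ b)%MM.
Proof.
move=> /free_ofP u_free homu rho_w.
rewrite {1}(mpolyE u) mulr_sumr raddf_sum /=.
have only_rho r : r \in msupp u -> (r <= rho + U_(w) *+ b)%MM -> r = rho.
  move=> r_u le_r; have r_w : r w = 0%N.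
    apply/eqP; rewrite -leqn0 leqNgt; apply: contraTN r_u => /u_free.
    by rewrite mcoeff_msupp => ->; rewrite eqxx.
  apply: lepm_mdeg_eq; last by rewrite (dhomog_mf homu r_u).
  apply/mnm_lepP => j; move/mnm_lepP/(_ j): le_r; rewrite mnmDE mulmnE mnm1E.
  by case: (eqVneq w j) => [<-|_]; rewrite ?r_w ?mul0n ?addn0.
have coef_r r : (p * (u@_r *: 'X_[r]))@_(rho + U_(w) *+ b)%MM =
    if r == rho then u@_rho * p@_(U_(w) *+ b)%MM else 0.
  rewrite -scalerAr mcoeffZ mcoeffMXE.
  case: eqP => [->|ne_r]; first by rewrite lem_addr addmC addmK.
  case: ifP => [le_r|]; last by rewrite mulr0.
  have [r_u|] := boolP (r \in msupp u); first by case: ne_r; exact: only_rho.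
  by rewrite mcoeff_msupp negbK => /eqP ->; rewrite mul0r.
rewrite (eq_bigr _ (fun r _ => coef_r r)).
have [rho_u|] := boolP (rho \in msupp u).
  by rewrite (bigD1_seq rho) ?msupp_uniq //= eqxx big1 ?addr0 // => r /negbTE ->.
by rewrite mcoeff_msupp negbK => /eqP ->; rewrite mul0r big1 // => r _; rewrite if_same.
Qed.

End FreeOf.

Arguments free_of {R n} w.

Section MciIdeal.
Variables (k : fieldType) (n : nat) (e : 'I_n -> nat).
Implicit Types (f g h : {mpoly k[n]}) (mu nu : 'X_{1..n}).
Local Notation I := (@in_mci_ideal k n e).

Lemma mci_ideal0 : I 0.
Proof. by exists (fun _ => 0); rewrite big1 // => j _; rewrite mul0r. Qed.

Lemma mci_idealD f g : I f -> I g -> I (f + g).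
Proof.
move=> [a ->] [b ->]; exists (fun j => a j + b j).
by rewrite -big_split /=; apply: eq_bigr => j _; rewrite mulrDl.
Qed.

Lemma mci_idealMl h f : I f -> I (h * f).
Proof.
move=> [a ->]; exists (fun j => h * a j).
by rewrite mulr_sumr; apply: eq_bigr => j _; rewrite mulrA.
Qed.

Lemma mci_idealMr h f : I f -> I (f * h).
Proof. by rewrite mulrC; apply: mci_idealMl. Qed.

Lemma mci_idealZ c f : I f -> I (c *: f).
Proof. by rewrite -mul_mpolyC; apply: mci_idealMl. Qed.

Lemma mci_idealN f : I f -> I (- f).
Proof. by rewrite -scaleN1r; apply: mci_idealZ. Qed.

Lemma mci_idealB f g : I f -> I g -> I (f - g).
Proof. by move=> If Ig; apply: mci_idealD => //; apply: mci_idealN. Qed.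

Lemma mci_ideal_sum (T : Type) (r : seq T) (P : pred T) (F : T -> {mpoly k[n]}) :
  (forall i, P i -> I (F i)) -> I (\sum_(i <- r | P i) F i).
Proof.
move=> IF; elim/big_rec: _ => [|i g Pi Ig]; first exact: mci_ideal0.
by apply: mci_idealD => //; apply: IF.
Qed.

Lemma mci_ideal_Xn (j : 'I_n) : I ('X_j ^+ e j).
Proof.
exists (fun i => (i == j)%:R).
by rewrite (bigD1 j) //= eqxx mul1r big1 ?addr0 // => i /negbTE ->; rewrite mul0r.
Qed.

Lemma mci_ideal_mpolyX mu (j : 'I_n) : (e j <= mu j)%N -> I 'X_[mu].
Proof.
move/mnm1Mn_lepm => le_mu.
by rewrite -(submK le_mu) mpolyXD -mpolyXn; apply: mci_idealMl; apply: mci_ideal_Xn.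
Qed.

Lemma mci_ideal_trivial (j : 'I_n) : e j = 0%N -> forall f, I f.
Proof.
by move=> ej0 f; rewrite -[f]mulr1 -(expr0 'X_j) -ej0; apply/mci_idealMl/mci_ideal_Xn.
Qed.

End MciIdeal.

Section Socle.
Variables (k : fieldType) (n : nat) (e : 'I_n -> nat) (w : 'I_n).
Hypothesis e_gt0 : forall j, (0 < e j)%N.
Implicit Types (f g h u : {mpoly k[n]}) (mu nu : 'X_{1..n}).
Local Notation I := (@in_mci_ideal k n e).

Definition socle : 'X_{1..n} := [multinom (e j).-1 | j < n].

Definition socle_off : 'X_{1..n} := [multinom if j == w then 0%N else (e j).-1 | j < n].

Local Notation tau := socle.
Local Notation s := socle_off.

Lemma socle_offE j : s j = if j == w then 0%N else (e j).-1.
Proof. by rewrite mnmE. Qed.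

Lemma socle_split : tau = (s + U_(w) *+ (e w).-1)%MM.
Proof.
apply/mnmP => j; rewrite mnmDE mulmnE mnm1E mnmE socle_offE.
by case: (eqVneq w j) => [<-|_]; rewrite ?mul1n ?mul0n ?add0n ?addn0.
Qed.

Lemma mdeg_socle : mdeg tau = (mdeg s + (e w).-1)%N.
Proof. by rewrite socle_split mdegD mdegMn mdeg1 mul1n. Qed.

Lemma lepm_socle_off mu : (mu <= tau)%MM -> mu w = 0%N -> (mu <= s)%MM.
Proof.
move=> /mnm_lepP le_mu mu_w; apply/mnm_lepP => j; rewrite socle_offE.
by case: eqP => [->|_]; [rewrite mu_w | move: (le_mu j); rewrite mnmE].
Qed.

Lemma mci_idealP f : I f <-> (forall mu, (mu <= tau)%MM -> f@_mu = 0).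
Proof.
split=> [[a ->] mu /mnm_lepP le_mu|f_tau].
  rewrite raddf_sum big1 // => j _; rewrite /= mpolyXn mcoeffMXE.
  case: ifP => // /mnm_lepP /(_ j); rewrite mulmnE mnm1E eqxx mul1n leqNgt.
  by move: (le_mu j); rewrite mnmE -ltnS prednK // => ->.
rewrite (mpolyE f); apply: mci_ideal_sum => mu _.
have [/f_tau ->|/forallPn [j]] := boolP (mu <= tau)%MM.
  by rewrite scale0r; apply: mci_ideal0.
rewrite mnmE -ltnNge prednK // => e_mu.
by apply: mci_idealZ; apply: mci_ideal_mpolyX e_mu.
Qed.

Lemma mci_ideal_socle f : I f -> f@_tau = 0.
Proof. by move/mci_idealP; apply; apply: lepm_refl. Qed.

Lemma mci_ideal_pairing f : (forall nu, (f * 'X_[nu])@_tau = 0) -> I f.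
Proof.
move=> f_pair; apply/mci_idealP => mu le_mu.
by rewrite -(f_pair (tau - mu)%MM) mcoeffMXE lem_subr submBA // addmC addmK.
Qed.

Lemma mcoeffMX_socle_off f : (f * 'X_[s])@_tau = f@_(U_(w) *+ (e w).-1)%MM.
Proof. by rewrite mcoeffMXE {1 2}socle_split lem_addr addmC addmK. Qed.

Lemma mci_ideal_free u D :
  u \is free_of w -> u \is D.-homog -> (mdeg s < D)%N -> I u.
Proof.
move=> /free_ofP u_free homu deg_s; apply/mci_idealP => mu le_mu.
have [mu_w|/u_free //] := posnP (mu w).
apply: (dhomog_nemf_coeff homu); apply: contraTneq deg_s => <-.
by rewrite -leqNgt; apply/lepm_mdeg/lepm_socle_off.
Qed.

Lemma mci_ideal_free_socle_off u :
  u \is free_of w -> u \is (mdeg s).-homog -> I (u - u@_s *: 'X_[s]).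
Proof.
move=> /free_ofP u_free homu; apply/mci_idealP => mu le_mu.
rewrite mcoeffB mcoeffZ mcoeffX.
have [mu_w|w_mu] := posnP (mu w); last first.
  rewrite u_free //; case: eqP => [s_mu|_]; last by rewrite mulr0 subr0.
  by move: w_mu; rewrite -s_mu socle_offE eqxx.
have [->|ne_s_mu] := eqVneq s mu; first by rewrite mulr1 subrr.
rewrite mulr0 subr0; apply: (dhomog_nemf_coeff homu).
apply: contra ne_s_mu => /eqP deg_mu; apply/eqP/esym.
exact: lepm_mdeg_eq (lepm_socle_off le_mu mu_w) deg_mu.
Qed.

Lemma mult_not_inj_surj l i f h :
  I (l * f) -> f \is i.-homog -> h \is i.+1.-homog -> (h * f)@_tau != 0 ->
  ~ (mult_injective e l i \/ mult_surjective e l i).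
Proof.
move=> Ilf homf homh hf_tau [l_inj|l_surj].
  by move: hf_tau; rewrite mci_ideal_socle ?eqxx //; apply/mci_idealMl/l_inj.
have [f' [_ I_h]] := l_surj h homh.
move: hf_tau; rewrite mci_ideal_socle ?eqxx //.
have -> : h * f = (h - l * f') * f + f' * (l * f) by ring.
by apply: mci_idealD; [apply: mci_idealMr | apply: mci_idealMl].
Qed.

End Socle.

Lemma eq_socle_off n (e e' : 'I_n -> nat) (w : 'I_n) :
  (forall j, j != w -> e j = e' j) -> socle_off e w = socle_off e' w.
Proof. by move=> ee'; apply/mnmP => j; rewrite !mnmE; case: eqP => // /eqP /ee' ->. Qed.

Section FormPlusXw.
Variables (k : fieldType) (n : nat) (e : 'I_n -> nat) (w : 'I_n).
Hypothesis e_gt0 : forall j, (0 < e j)%N.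
Variable L : {mpoly k[n]}.
Hypotheses (L_free : L \is free_of w) (L_homog : L \is 1.-homog).
Implicit Types (f g q u : {mpoly k[n]}) (mu nu rho : 'X_{1..n}).
Local Notation I := (@in_mci_ideal k n e).
Local Notation tau := (socle e).
Local Notation s := (socle_off e w).
Local Notation l := (L + 'X_w).

Definition lquo b := \sum_(i < b) 'X_w ^+ (b.-1 - i) * (- L) ^+ i.

Lemma mul_lquo b : l * lquo b = 'X_w ^+ b - (- L) ^+ b.
Proof. by rewrite subrXX opprK addrC. Qed.

Lemma lquoS b : lquo b.+1 = 'X_w ^+ b + (- L) * lquo b.
Proof.
rewrite /lquo big_ord_recl subn0 expr0 mulr1 mulr_sumr; congr (_ + _).
apply: eq_bigr => i _; rewrite lift0 /= exprS mulrCA; congr (_ * (_ ^+ _ * _)); lia.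
Qed.

Lemma dhomog_lquo b : lquo b \is b.-1.-homog.
Proof.
apply: rpred_sum => i _.
have deg_i : (1 * (b.-1 - i) + 1 * i = b.-1)%N by have := ltn_ord i; lia.
rewrite -{2}deg_i; apply: dhomogM; apply: dhomogMn; rewrite ?rpredN ?dhomogXi //.
Qed.

Lemma mci_ideal_Xw_oppL f b : I (l * f) -> I (f * 'X_w ^+ b - f * (- L) ^+ b).
Proof. by move=> Ilf; rewrite -mulrBr -mul_lquo mulrA [f * l]mulrC; apply: mci_idealMr. Qed.

Lemma mci_ideal_mulLn f : I (l * f) -> I (f * L ^+ e w).
Proof.
move=> Ilf; have I_negL : I (f * (- L) ^+ e w).
  have -> : f * (- L) ^+ e w = f * 'X_w ^+ e w - (f * 'X_w ^+ e w - f * (- L) ^+ e w) by ring.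
  by apply: mci_idealB; [apply/mci_idealMl/mci_ideal_Xn | apply: mci_ideal_Xw_oppL].
by rewrite -[L]opprK exprNn mulrCA; apply: mci_idealMl.
Qed.

Lemma mci_ideal_mpolyX_reduce f nu : I (l * f) ->
  I (f * 'X_[nu] - f * ('X_[nu - U_(w) *+ nu w] * (- L) ^+ nu w)).
Proof.
move=> Ilf; rewrite {1}(mpolyX_subm1Mn _ w); set nu' := (nu - _)%MM.
have -> : f * ('X_[nu'] * 'X_w ^+ nu w) - f * ('X_[nu'] * (- L) ^+ nu w) =
    'X_[nu'] * (f * 'X_w ^+ nu w - f * (- L) ^+ nu w) by ring.
by apply/mci_idealMl/mci_ideal_Xw_oppL.
Qed.

Lemma mcoeff_Xw_top_eq0 f rho : (rho <= s)%MM -> mdeg rho = e w -> (L ^+ e w)@_rho != 0 ->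
  I (l * f) -> f@_(U_(w) *+ (e w).-1)%MM = 0.
Proof.
move=> le_rho deg_rho L_rho Ilf.
have rho_w : rho w = 0%N by move/mnm_lepP: le_rho => /(_ w); rewrite socle_offE eqxx leqn0 => /eqP.
have le_tau : (rho + U_(w) *+ (e w).-1 <= tau)%MM.
  by rewrite (socle_split _ w); apply/mnm_lepP => j; rewrite !mnmDE leq_add2r; apply/mnm_lepP.
move/mci_idealP: (mci_ideal_mulLn Ilf) => /(_ e_gt0 _ le_tau).
rewrite mcoeffM_free ?rpredX // => [/eqP|]; first by rewrite mulf_eq0 (negbTE L_rho) => /eqP.
by rewrite deg_rho -[X in X.-homog]mul1n; apply: dhomogMn.
Qed.

Lemma mult_injective_low i rho : (rho <= s)%MM -> mdeg rho = e w ->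
  (L ^+ e w)@_rho != 0 -> (i < e w)%N -> mult_injective e l i.
Proof.
move=> le_rho deg_rho L_rho lt_i f homf Ilf.
have f_top := mcoeff_Xw_top_eq0 le_rho deg_rho L_rho Ilf.
apply: (mci_ideal_pairing e_gt0) => nu.
set nu' := (nu - U_(w) *+ nu w)%MM; set u := 'X_[nu'] * (- L) ^+ nu w.
have u_free : u \is free_of w by rewrite rpredM ?rpredX ?rpredN // free_of_mpolyX subm1Mn_eq0.
have homu : u \is (mdeg nu).-homog.
  rewrite (mdeg_subm1Mn _ w) -/nu' -[X in (_ + X)%N]mul1n.
  by apply: dhomogM; [rewrite dhomogX | apply: dhomogMn; rewrite rpredN].
have -> : (f * 'X_[nu])@_tau = (f * u)@_tau.
  by apply/eqP; rewrite -subr_eq0 -mcoeffB mci_ideal_socle //; apply: mci_ideal_mpolyX_reduce.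
case: (ltngtP (mdeg nu) (mdeg s)) => [lt_nu|gt_nu|eq_nu].
- apply: dhomog_nemf_coeff (dhomogM homf homu) _.
  change (mdeg tau != i + mdeg nu)%N; rewrite (mdeg_socle _ w); apply/eqP; lia.
- by apply/(mci_ideal_socle e_gt0)/mci_idealMl/(mci_ideal_free e_gt0 u_free homu).
rewrite eq_nu in homu; rewrite -[u](subrK (u@_s *: 'X_[s])) mulrDr mcoeffD.
have I_u_top := mci_ideal_free_socle_off e_gt0 u_free homu.
rewrite (mci_ideal_socle e_gt0 (mci_idealMl f I_u_top)) add0r.
by rewrite -scalerAr mcoeffZ mcoeffMX_socle_off f_top mulr0.
Qed.

Lemma dhomog_decompose_free g D : g \is D.+1.-homog -> exists q u,
  [/\ q \is D.-homog, u \is free_of w, u \is D.+1.-homog & g = l * q + u].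
Proof.
move=> homg; pose nu' mu := (mu - U_(w) *+ mu w)%MM.
exists (\sum_(mu <- msupp g) g@_mu *: ('X_[nu' mu] * lquo (mu w))).
exists (\sum_(mu <- msupp g) g@_mu *: ('X_[nu' mu] * (- L) ^+ mu w)).
split.
- rewrite big_seq; apply: rpred_sum => mu mu_g; apply: rpredZ.
  have := dhomog_mf homg mu_g; rewrite /= (mdeg_subm1Mn _ w) -/(nu' mu).
  case: (mu w) => [|b] deg_mu; first by rewrite /lquo big_ord0 mulr0 rpred0.
  have -> : D = (mdeg (nu' mu) + b.+1.-1)%N by lia.
  by apply: dhomogM; [rewrite dhomogX | apply: dhomog_lquo].
- apply: rpred_sum => mu _; apply/rpredZ/rpredM; last by rewrite rpredX ?rpredN.
  by rewrite free_of_mpolyX subm1Mn_eq0.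
- rewrite big_seq; apply: rpred_sum => mu mu_g; apply: rpredZ.
  rewrite -(dhomog_mf homg mu_g) /= (mdeg_subm1Mn _ w) -/(nu' mu) -[X in (_ + X)%N]mul1n.
  by apply: dhomogM; [rewrite dhomogX | apply: dhomogMn; rewrite rpredN].
rewrite {1}(mpolyE g) mulr_sumr -big_split /=; apply: eq_bigr => mu _.
rewrite -scalerAr -scalerDr (mpolyX_subm1Mn _ w) -/(nu' mu).
have -> : 'X_w ^+ mu w = l * lquo (mu w) + (- L) ^+ mu w by rewrite mul_lquo subrK.
by congr (_ *: _); ring.
Qed.

Lemma mpolyX_socle_off_image : (e w <= mdeg s)%N -> (L ^+ mdeg s)@_s != 0 ->
  exists2 r, r \is (mdeg s).-1.-homog & I ('X_[s] - l * r).
Proof.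
(* L^m = L^(m - e_w) L^e_w, and L^e_w is congruent to (-x_w)^e_w, hence to 0,
   modulo l and the ideal; on the other hand L^m is congruent to M x^s. *)
move=> le_ew L_s; set m := mdeg s in le_ew L_s *; set M := (L ^+ m)@_s in L_s.
set sgn : {mpoly k[n]} := (-1) ^+ e w.
pose r := - (sgn * L ^+ (m - e w) * lquo (e w)).
exists (M^-1 *: r).
  have ew_gt0 := e_gt0 w.
  rewrite rpredZ // rpredN; have -> : m.-1 = (0 * e w + 1 * (m - e w) + (e w).-1)%N by lia.
  apply: dhomogM; last exact: dhomog_lquo.
  by apply: dhomogM; [apply: dhomogMn; rewrite rpredN dhomog1 | apply: dhomogMn].
have I_Lr : I (L ^+ m - l * r).
  have -> : L ^+ m - l * r = sgn * L ^+ (m - e w) * 'X_w ^+ e w.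
    rewrite /r mulrN opprK mulrCA mul_lquo exprNn -/sgn -{1}(subnK le_ew) exprD.
    apply/eqP; rewrite -subr_eq0; apply/eqP.
    transitivity (L ^+ (m - e w) * L ^+ e w * (1 - sgn ^+ 2)); first by ring.
    by rewrite sqrr_sign subrr mulr0.
  by apply/mci_idealMl/mci_ideal_Xn.
have I_Lm : I (L ^+ m - M *: 'X_[s]).
  apply: (mci_ideal_free_socle_off e_gt0); first exact: rpredX.
  by have := dhomogMn m L_homog; rewrite mul1n.
have -> : 'X_[s] - l * (M^-1 *: r) = M^-1 *: ((L ^+ m - l * r) - (L ^+ m - M *: 'X_[s])).
  have -> : L ^+ m - l * r - (L ^+ m - M *: 'X_[s]) = M *: 'X_[s] - l * r.
    by rewrite -!mul_mpolyC; ring.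
  by rewrite scalerBr scalerA mulVf // scale1r scalerAr.
by apply/mci_idealZ/mci_idealB.
Qed.

Lemma mult_surjective_high i : (mdeg s <= i.+1)%N -> (e w <= mdeg s)%N ->
  (L ^+ mdeg s)@_s != 0 -> mult_surjective e l i.
Proof.
move=> le_s le_ew L_s g homg.
have [q [u [homq u_free homu ->]]] := dhomog_decompose_free homg.
move: le_s; rewrite leq_eqVlt => /orP [/eqP deg_s|lt_s].
  have [r homr I_s] := mpolyX_socle_off_image le_ew L_s.
  rewrite deg_s /= in homr; rewrite -deg_s in homu.
  exists (q + u@_s *: r); split; first by rewrite rpredD // rpredZ.
  have -> : l * q + u - l * (q + u@_s *: r) = (u - u@_s *: 'X_[s]) + u@_s *: ('X_[s] - l * r).
    by rewrite -!mul_mpolyC; ring.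
  by apply: mci_idealD; [apply: mci_ideal_free_socle_off | apply: mci_idealZ].
exists q; split => //; rewrite addrAC subrr add0r.
exact: (mci_ideal_free e_gt0 u_free homu).
Qed.

Theorem mci_WLP_of_mcoeff_socle_off : (e w <= mdeg s <= (e w).+1)%N -> (L ^+ mdeg s)@_s != 0 ->
  mci_WLP k e.
Proof.
case/andP => le_ew le_s L_s.
have [rho [le_rho deg_rho L_rho]] : exists rho,
    [/\ (rho <= s)%MM, mdeg rho = e w & (L ^+ e w)@_rho != 0].
  move: le_ew; rewrite leq_eqVlt => /orP [/eqP deg_s|lt_ew].
    by exists s; rewrite deg_s lepm_refl.
  have deg_s : mdeg s = (e w).+1 by apply/eqP; rewrite eqn_leq le_s.
  move: L_s; rewrite deg_s exprS => /(mcoeff_dhomog1M_neq0 L_homog) [j s_j L_j].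
  by exists (s - U_(j))%MM; rewrite lem_subr mdeg_subm1 // deg_s; split.
exists l; split; first by rewrite rpredD ?dhomogXi.
move=> i; have [lt_i|le_i] := ltnP i (e w).
  by left; apply: mult_injective_low le_rho deg_rho L_rho lt_i.
by right; apply: mult_surjective_high => //; apply: leq_trans le_s _.
Qed.

Lemma not_inj_surj_of_mcoeff_socle_off : e w = mdeg s -> (L ^+ e w)@_s = 0 ->
  ~ (mult_injective e l (e w).-1 \/ mult_surjective e l (e w).-1).
Proof.
move=> deg_s L_s; have ew_gt0 := e_gt0 w.
apply: (mult_not_inj_surj e_gt0 (f := lquo (e w)) (h := 'X_[s])).
- rewrite mul_lquo; apply: mci_idealB; first exact: mci_ideal_Xn.
  rewrite exprNn; apply: mci_idealMl.
  have homLe : L ^+ e w \is (mdeg s).-homog by have := dhomogMn (e w) L_homog; rewrite mul1n deg_s.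
  by have := mci_ideal_free_socle_off e_gt0 (rpredX _ L_free) homLe; rewrite L_s scale0r subr0.
- exact: dhomog_lquo.
- by rewrite prednK // dhomogX deg_s.
rewrite -(prednK ew_gt0) lquoS mulrDr mcoeffD mulrC mcoeffMX_socle_off.
rewrite mpolyXn mcoeffX eqxx (mci_ideal_socle e_gt0) ?addr0 ?oner_eq0 //.
rewrite mulrA; apply: mci_idealMr; apply: (mci_ideal_free (w := w) e_gt0 (D := (mdeg s).+1)).
- by rewrite rpredM ?rpredN // free_of_mpolyX socle_offE eqxx.
- by rewrite -addn1 dhomogM ?rpredN ?dhomogX.
- exact: ltnSn.
Qed.

End FormPlusXw.

Section FormWithoutXw.
Variables (k : fieldType) (n : nat) (e : 'I_n -> nat) (w : 'I_n).
Hypothesis e_gt0 : forall j, (0 < e j)%N.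
Variable l : {mpoly k[n]}.
Hypotheses (l_homog : l \is 1.-homog) (l_w : l@_U_(w) = 0).
Local Notation I := (@in_mci_ideal k n e).
Local Notation tau := (socle e).
Local Notation s := (socle_off e w).

Lemma mci_ideal_mul_socle_off_sub (i : 'I_n) : (0 < s i)%N ->
  I (l * 'X_[s - U_(i)] - l@_U_(i) *: 'X_[s]).
Proof.
move=> s_i; rewrite {1}(dhomog1E l_homog) mulr_suml (bigD1 i) //= -scalerAl -mpolyXD.
rewrite addmC submK ?mnm1_lepm // addrAC subrr add0r.
apply: mci_ideal_sum => j ji; rewrite -scalerAl.
have [->|jw] := eqVneq j w; first by rewrite l_w scale0r; apply: mci_ideal0.
apply: mci_idealZ; rewrite -mpolyXD; apply: (@mci_ideal_mpolyX _ _ _ _ j).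
by rewrite mnmDE mnmBE !mnm1E eqxx eq_sym (negbTE ji) socle_offE (negbTE jw) subn0 add1n prednK.
Qed.

Lemma not_inj_surj_of_mcoeff f (i : 'I_n) : e w = mdeg s -> (0 < s i)%N ->
  f \is (e w).-1.-homog -> I (l * f) -> f@_(s - U_(i))%MM != 0 ->
  ~ (mult_injective e l (e w).-1 \/ mult_surjective e l (e w).-1).
Proof.
move=> deg_s s_i homf Ilf f_i.
have le_i := mnm1_lepm s_i.
apply: (mult_not_inj_surj e_gt0 Ilf homf (h := 'X_[U_(i) + U_(w) *+ (e w).-1])).
  by rewrite dhomogX /= mdegD mdegMn !mdeg1 mul1n add1n prednK.
have le_tau : (U_(i) + U_(w) *+ (e w).-1 <= tau)%MM.
  by rewrite (socle_split _ w); apply/mnm_lepP => j; rewrite !mnmDE leq_add2r; apply/mnm_lepP.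
have sub_tau : (tau - (U_(i) + U_(w) *+ (e w).-1))%MM = (s - U_(i))%MM.
  by apply/mnmP => j; rewrite (socle_split _ w) !mnmBE !mnmDE subnDr.
by rewrite mulrC mcoeffMXE le_tau sub_tau.
Qed.

Lemma not_inj_surj_two (i1 i2 : 'I_n) : e w = mdeg s -> i1 != i2 ->
  (0 < s i1)%N -> (0 < s i2)%N ->
  ~ (mult_injective e l (e w).-1 \/ mult_surjective e l (e w).-1).
Proof.
move=> deg_s i12 s_i1 s_i2.
have homX (i : 'I_n) : (0 < s i)%N -> ('X_[s - U_(i)] : {mpoly k[n]}) \is (e w).-1.-homog.
  by move=> s_i; rewrite dhomogX /= mdeg_subm1 ?deg_s.
have I_X := mci_ideal_mul_socle_off_sub.
have [l_i2|l_i2] := eqVneq (l@_U_(i2)) 0.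
  apply: (not_inj_surj_of_mcoeff deg_s s_i2 (homX _ s_i2)); last by rewrite mcoeffX eqxx oner_eq0.
  by have := I_X _ s_i2; rewrite l_i2 scale0r subr0.
(* l * x^(s - U_i) is congruent to l_i x^s, so l kills f modulo the ideal. *)
pose f := l@_U_(i2) *: 'X_[s - U_(i1)] - l@_U_(i1) *: 'X_[s - U_(i2)].
apply: (not_inj_surj_of_mcoeff (f := f) deg_s s_i1).
- by rewrite rpredB ?rpredZ ?homX.
- have -> : l * f = l@_U_(i2) *: (l * 'X_[s - U_(i1)] - l@_U_(i1) *: 'X_[s])
                   - l@_U_(i1) *: (l * 'X_[s - U_(i2)] - l@_U_(i2) *: 'X_[s]).
    by rewrite /f -!mul_mpolyC; ring.
  by apply: mci_idealB; apply: mci_idealZ; apply: I_X.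
have ne_mnm : (s - U_(i2) == s - U_(i1))%MM = false.
  apply/negbTE/negP => /eqP/mnmP/(_ i1); rewrite !mnmBE !mnm1E eqxx eq_sym (negbTE i12).
  by rewrite subn0 subn1; case: (s i1) s_i1 => // m _ /esym/n_Sn.
by rewrite mcoeffB !mcoeffZ !mcoeffX eqxx ne_mnm mulr1 mulr0 subr0.
Qed.

End FormWithoutXw.

Section LastVariable.
Variables (m : nat) (d : nat -> nat).
Local Notation s := (socle_off (fun j : 'I_m.+1 => d j) ord_max).

Lemma socle_off_widen (i : 'I_m) : s (widen_ord (leqnSn m) i) = (d i).-1.
Proof. by rewrite socle_offE -(inj_eq val_inj) /= ltn_eqF. Qed.

Lemma mdeg_socle_off_max : mdeg s = (\sum_(i < m) (d i).-1)%N.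
Proof.
rewrite mdegE big_ord_recr /= socle_offE eqxx addn0.
by apply: eq_bigr => i _; rewrite socle_off_widen.
Qed.

Lemma mnm_fact_socle_off_max : mnm_fact s = (\prod_(i < m) ((d i).-1)`!)%N.
Proof.
rewrite /mnm_fact big_ord_recr /= socle_offE eqxx muln1.
by apply: eq_bigr => i _; rewrite socle_off_widen.
Qed.

End LastVariable.

Section WLP.
Variables (k : fieldType) (n : nat).
Implicit Types (e : 'I_n -> nat) (l : {mpoly k[n]}).

Lemma mult_inj_surjZ e l c i : c != 0 ->
  mult_injective e l i \/ mult_surjective e l i ->
  mult_injective e (c *: l) i \/ mult_surjective e (c *: l) i.
Proof.
move=> c_nz [l_inj|l_surj]; [left => f homf Ilf | right => g homg].
  by apply: l_inj homf _; rewrite -[l](scalerK c_nz) -scalerAl; apply: mci_idealZ.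
have [f [homf Ig]] := l_surj g homg; exists (c^-1 *: f); split; first exact: rpredZ.
by rewrite -scalerAl -scalerAr scalerA mulfV // scale1r.
Qed.

Lemma mci_WLP_trivial e (j : 'I_n) : e j = 0%N -> mci_WLP k e.
Proof.
move=> ej0; exists 0; split=> [|i]; first exact: rpred0.
by left=> f _ _; apply: mci_ideal_trivial ej0 f.
Qed.

Theorem mci_WLP_of_multinomial e (w : 'I_n) :
  (forall j, j != w -> (0 < e j)%N) ->
  (e w <= mdeg (socle_off e w) <= (e w).+1)%N ->
  (multinomial (socle_off e w))%:R != 0 :> k -> mci_WLP k e.
Proof.
move=> e_gt0_off_w le_ew mult_nz; have [ew0|ew_gt0] := posnP (e w).
  exact: mci_WLP_trivial ew0.
have e_gt0 j : (0 < e j)%N by case: (eqVneq j w) => [->|/e_gt0_off_w].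
pose L : {mpoly k[n]} := \sum_(j | j != w) 'X_j.
have L_coef (j : 'I_n) : L@_U_(j) = (j != w)%:R.
  rewrite raddf_sum /=; have [->|jw] := eqVneq j w.
    by rewrite big1 // => i /negbTE iw; rewrite mcoeffX eq_mnm1 iw.
  by rewrite (bigD1 j) //= mcoeffX eqxx big1 ?addr0 // => i /andP [_ /negbTE ij];
    rewrite mcoeffX eq_mnm1 ij.
have L_homog : L \is 1.-homog by apply: rpred_sum => j _; apply: dhomogXi.
have L_free : L \is free_of w by rewrite dhomog1_free_of // L_coef eqxx.
apply: (mci_WLP_of_mcoeff_socle_off e_gt0 L_free L_homog le_ew).
rewrite mcoeff_dhomog1X // big1 ?mulr1 // => j _; rewrite L_coef.
by have [->|_] := eqVneq j w; rewrite ?socle_offE ?eqxx ?expr0 ?expr1n.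
Qed.

Theorem not_mci_WLP_of_multinomial e (w : 'I_n) :
  (forall j, j != w -> (0 < e j)%N) -> e w = mdeg (socle_off e w) ->
  (multinomial (socle_off e w))%:R = 0 :> k -> ~ mci_WLP k e.
Proof.
move=> e_gt0_off_w deg_s mult0 [l [homl l_wlp]].
have mult_neq1 : multinomial (socle_off e w) != 1%N.
  by apply/eqP => m1; move/eqP: mult0; rewrite m1 oner_eq0.
have [i1 [i2 [i12 s_i1 s_i2]]] := multinomial_neq1 mult_neq1.
have ew_gt0 : (0 < e w)%N by rewrite deg_s (leq_trans _ (lepm_mdeg (mnm1_lepm s_i1))) ?mdeg1.
have e_gt0 j : (0 < e j)%N by case: (eqVneq j w) => [->|/e_gt0_off_w].
have [l_w|l_w_neq0] := eqVneq (l@_U_(w)) 0.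
  by apply: (not_inj_surj_two e_gt0 homl l_w deg_s i12 s_i1 s_i2); apply: l_wlp.
pose L := (l@_U_(w))^-1 *: l - 'X_w.
have L_homog : L \is 1.-homog by rewrite rpredB ?rpredZ ?dhomogXi.
have L_free : L \is free_of w.
  by rewrite dhomog1_free_of // mcoeffB mcoeffZ mcoeffX eqxx mulVf ?subrr.
apply: (not_inj_surj_of_mcoeff_socle_off e_gt0 L_free L_homog deg_s).
  by rewrite deg_s mcoeff_dhomog1X // mult0 mul0r.
by have := mult_inj_surjZ (invr_neq0 l_w_neq0) (l_wlp (e w).-1); rewrite /L subrK.
Qed.

End WLP.

Theorem proposition4p10 (k : fieldType) (p : nat) (n : nat) (d : nat -> nat)
  (hp : p \in [pchar k]) (hn : (0 < n)%N)
  (hd : forall i : nat, (i < n.-1)%N -> (0 < d i)%N)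
  (hdn : d n.-1 = (\sum_(i < n.-1) (d i).-1)%N) :
  let A : 'I_n -> nat := fun j => d j in
  let B : 'I_n -> nat := fun j => if (j == n.-1 :> nat) then (d j).-1 else d j in
  let multinom := ((d n.-1)`! %/ \prod_(i < n.-1) ((d i).-1)`!)%N in
  (~~ (p %| multinom)%N -> mci_WLP k A /\ mci_WLP k B) /\
  ((p %| multinom)%N -> ~ mci_WLP k A).
Proof.
case: n hn hd hdn => [//|m] _ hd hdn A B multinom; move: hd hdn => /= hd hdn.
pose w : 'I_m.+1 := ord_max.
have lt_m (j : 'I_m.+1) : j != w -> (j < m)%N.
  move=> jw; rewrite ltn_neqAle -ltnS ltn_ord andbT.
  by apply: contra jw => /eqP jm; apply/eqP/val_inj.
have A_gt0 j : j != w -> (0 < A j)%N by move/lt_m/hd.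
have B_A j : j != w -> B j = A j by move/lt_m => lt_j; rewrite /B ltn_eqF.
have B_gt0 j : j != w -> (0 < B j)%N by move=> jw; rewrite B_A ?A_gt0.
have sB : socle_off B w = socle_off A w by apply: eq_socle_off.
have deg_s : mdeg (socle_off A w) = d m by rewrite mdeg_socle_off_max hdn.
have mult_s : multinomial (socle_off A w) = multinom.
  by rewrite /multinomial deg_s mnm_fact_socle_off_max.
rewrite (dvdn_pcharf hp) -mult_s; split=> [mult_nz|/eqP mult0].
  split; apply: (mci_WLP_of_multinomial (w := w)); rewrite ?sB ?deg_s //=.
  - by rewrite leqnn leqnSn.
  - by rewrite /B /= eqxx leq_pred leqSpred.
by apply: not_mci_WLP_of_multinomial A_gt0 _ mult0; rewrite deg_s.
Qed.
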